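(* Each of the following sets is definable in $\mathbf{Com}$: (a) the set of all Abelian periodic group varieties; (b) the set of all combinatorial commutative semigroup varieties; (c) the set of all commutative nil-varieties of semigroups.
   Context: $\mathbf{Com}$ denotes the lattice of all commutative semigroup varieties with join $\vee$ and meet $\wedge$; a subset of a lattice $L$ is definable in $L$ if it is the set of elements satisfying some first-order formula with one free variable in the language $\{\vee,\wedge\}$. A semigroup variety is combinatorial if all groups in it are trivial; it is a nil-variety if all its semigroups are nil-semigroups. An Abelian periodic group variety is a variety of Abelian groups of bounded exponent (including the trivial variety). *)

From mathcomp Require Import all_boot.
Set Implicit Arguments. Unset Strict Implicit. Unset Printing Implicit Defensive.

(* Words over the countable alphabet {x_0, x_1, ...}: nonempty sequences of
   letter indices; the product of the free semigroup is concatenation. *)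
Definition word := seq nat.

Definition subst (s : nat -> word) (w : word) : word := flatten (map s w).

Definition theory := word -> word -> Prop.

(* Equational theories of commutative semigroup varieties: fully invariant
   congruences of the free semigroup F_omega containing x0 x1 = x1 x0.
   By Birkhoff's theorem these are in order-reversing bijection with
   commutative semigroup varieties. *)
Record is_eqtheory (T : theory) : Prop := {
  eqt_nonempty : forall u v, T u v -> u <> [::] /\ v <> [::];
  eqt_refl : forall u, u <> [::] -> T u u;
  eqt_sym : forall u v, T u v -> T v u;
  eqt_trans : forall u v w, T u v -> T v w -> T u w;
  eqt_mulr : forall u v w, T u v -> w <> [::] -> T (u ++ w) (v ++ w);
  eqt_mull : forall u v w, T u v -> w <> [::] -> T (w ++ u) (w ++ v);
  eqt_subst : forall u v (s : nat -> word), T u v ->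
      (forall n, s n <> [::]) -> T (subst s u) (subst s v);
  eqt_comm : T [:: 0; 1] [:: 1; 0]
}.

(* V \/ W corresponds to Id(V) \cap Id(W). *)
Definition com_join (T1 T2 : theory) : theory := fun u v => T1 u v /\ T2 u v.
(* V /\ W corresponds to the equational theory generated by Id(V) \cup Id(W). *)
Definition com_meet (T1 T2 : theory) : theory := fun u v =>
  forall T, is_eqtheory T -> (forall a b, T1 a b -> T a b) ->
            (forall a b, T2 a b -> T a b) -> T u v.

Inductive lterm : Type :=
| LVar : nat -> lterm
| LJoin : lterm -> lterm -> lterm
| LMeet : lterm -> lterm -> lterm.

Inductive lformula : Type :=
| FEq : lterm -> lterm -> lformula
| FNot : lformula -> lformula
| FAnd : lformula -> lformula -> lformula
| FOr : lformula -> lformula -> lformula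
| FImp : lformula -> lformula -> lformula
| FForall : nat -> lformula -> lformula
| FExists : nat -> lformula -> lformula.

Definition env := nat -> theory.

Definition upd (e : env) (n : nat) (T : theory) : env :=
  fun m => if m == n then T else e m.

Fixpoint eval_term (e : env) (t : lterm) : theory :=
  match t with
  | LVar n => e n
  | LJoin t1 t2 => com_join (eval_term e t1) (eval_term e t2)
  | LMeet t1 t2 => com_meet (eval_term e t1) (eval_term e t2)
  end.

Definition same_theory (T1 T2 : theory) : Prop := forall u v, T1 u v <-> T2 u v.

Fixpoint holds (e : env) (f : lformula) : Prop :=
  match f with
  | FEq t1 t2 => same_theory (eval_term e t1) (eval_term e t2)
  | FNot f1 => ~ holds e f1
  | FAnd f1 f2 => holds e f1 /\ holds e f2
  | FOr f1 f2 => holds e f1 \/ holds e f2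
  | FImp f1 f2 => holds e f1 -> holds e f2
  | FForall n f1 => forall T, is_eqtheory T -> holds (upd e n T) f1
  | FExists n f1 => exists T, is_eqtheory T /\ holds (upd e n T) f1
  end.

Definition definable (P : theory -> Prop) : Prop :=
  exists (f : lformula) (x : nat), forall e : env,
    (forall n, is_eqtheory (e n)) -> (holds e f <-> P (e x)).

Record semigroup : Type := Semigroup {
  sg_car :> Type;
  sg_op : sg_car -> sg_car -> sg_car;
  sg_pt : sg_car;  (* semigroups are nonempty *)
  sg_assoc : forall x y z, sg_op x (sg_op y z) = sg_op (sg_op x y) z
}.

Fixpoint eval_from (S : semigroup) (a : nat -> S) (acc : S) (w : word) : S :=
  match w with
  | [::] => acc
  | n :: w' => eval_from a (sg_op acc (a n)) w'
  end.

Definition eval_word (S : semigroup) (a : nat -> S) (w : word) : S :=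
  match w with
  | [::] => sg_pt S
  | n :: w' => eval_from a (a n) w'
  end.

Definition in_variety (T : theory) (S : semigroup) : Prop :=
  forall u v, T u v -> forall a : nat -> S, eval_word a u = eval_word a v.

(* x^n for n >= 1 (spow x 0 = x as well, never used). *)
Fixpoint spow (S : semigroup) (x : S) (n : nat) : S :=
  match n with
  | 0 | 1 => x
  | k.+1 => sg_op (spow x k) x
  end.

Definition is_group (S : semigroup) : Prop :=
  exists e : S, (forall x, sg_op e x = x /\ sg_op x e = x) /\
    forall x, exists y, sg_op x y = e /\ sg_op y x = e.

Definition is_abelian_group_exp (S : semigroup) (n : nat) : Prop :=
  (forall x y : S, sg_op x y = sg_op y x) /\
  exists e : S, (forall x, sg_op e x = x /\ sg_op x e = x) /\
    (forall x, exists y, sg_op x y = e /\ sg_op y x = e) /\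
    (forall x, spow x n = e).

Definition is_trivial (S : semigroup) : Prop := forall x y : S, x = y.

Definition is_nil_semigroup (S : semigroup) : Prop :=
  exists z : S, (forall x, sg_op z x = z /\ sg_op x z = z) /\
    forall x, exists n, 0 < n /\ spow x n = z.

Definition abelian_periodic_group_variety (T : theory) : Prop :=
  exists n, 0 < n /\
    forall S : semigroup, in_variety T S <-> is_abelian_group_exp S n.

Definition combinatorial (T : theory) : Prop :=
  forall S : semigroup, in_variety T S -> is_group S -> is_trivial S.

Definition nil_variety (T : theory) : Prop :=
  forall S : semigroup, in_variety T S -> is_nil_semigroup S.

From Pilot Require Import Defs.
From mathcomp Require Import all_boot zify all_algebra.
From Stdlib Require Import Classical ProofIrrelevance.
Set Implicit Arguments. Unset Strict Implicit. Unset Printing Implicit Defensive.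
Import GRing.Theory.

(* The atoms of Com are the varieties SL of semilattices, ZM of
   null semigroups and A_p of Abelian groups of prime exponent p.  They are
   told apart in first-order terms: SL is the only atom X such that every
   variety whose only atom is X lies below X; ZM is the only atom lying
   below two incomparable varieties having ZM as their only atom; the
   varieties whose only atom is A_p form the chain of the A_(p^i).  A
   commutative variety containing neither SL nor ZM is some A_n, so (a) is
   defined by "no atom SL or ZM below x"; a variety is combinatorial iff
   its only such subvariety is trivial, which defines (b); and it is a
   nil-variety iff moreover it does not contain SL, which defines (c). *)

Definition xpow k : word := nseq k 0.

Lemma xpowD a b : xpow (a + b) = xpow a ++ xpow b.
Proof. exact: nseqD. Qed.

Lemma xpow_neq0 k : 0 < k -> xpow k <> [::].
Proof. by case: k. Qed.

Lemma catl_neq0 (u w : word) : u <> [::] -> u ++ w <> [::].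
Proof. by case: u. Qed.

Lemma catr_neq0 (u w : word) : w <> [::] -> u ++ w <> [::].
Proof. by case: u => //; case: w. Qed.

Lemma subst_cat s u w : subst s (u ++ w) = subst s u ++ subst s w.
Proof. by rewrite /subst map_cat flatten_cat. Qed.

Lemma subst_cons s i u : subst s (i :: u) = s i ++ subst s u.
Proof. by []. Qed.

Lemma subst_nseq s k i : subst s (nseq k i) = flatten (nseq k (s i)).
Proof. by elim: k => //= k <-. Qed.

Lemma flatten_nseq_nseq k l (x : nat) : flatten (nseq k (nseq l x)) = nseq (k * l) x.
Proof. by elim: k => //= k ->; rewrite mulSn nseqD. Qed.

Lemma subst_neq0 s u : (forall n, s n <> [::]) -> u <> [::] -> subst s u <> [::].
Proof. by case: u => // i u Hs _; rewrite subst_cons; apply: catl_neq0. Qed.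

Lemma subst_const s v : (forall k, k \in v -> s k = [:: 0]) -> subst s v = xpow (size v).
Proof.
elim: v => //= k v IH Hs; rewrite subst_cons Hs ?mem_head // IH // => k' Hk'.
by apply: Hs; rewrite in_cons Hk' orbT.
Qed.

Lemma subst_xpow g u : subst (fun i => xpow (g i)) u = xpow (sumn (map g u)).
Proof. by elim: u => //= i u IH; rewrite subst_cons IH xpowD. Qed.

Lemma subst_xpow_letter i k : subst (fun=> [:: i]) (xpow k) = nseq k i.
Proof. by rewrite subst_nseq; elim: k => //= k ->. Qed.

Lemma perm_subst s u v : perm_eq u v -> perm_eq (subst s u) (subst s v).
Proof. by move=> Hp; apply/perm_flatten/perm_map. Qed.

Lemma size_subst s u : (forall n, s n <> [::]) -> size u <= size (subst s u).
Proof.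
move=> Hs; elim: u => //= i u IH; rewrite subst_cons size_cat.
have: 0 < size (s i) by rewrite lt0n size_eq0; apply/eqP/Hs.
lia.
Qed.

Lemma sumn_subst f s u :
  sumn (map f (subst s u)) = sumn (map (fun i => sumn (map f (s i))) u).
Proof. by elim: u => //= i u IH; rewrite subst_cons map_cat sumn_cat IH. Qed.

Lemma has_subst P s u : has P (subst s u) = has (fun i => has P (s i)) u.
Proof. by elim: u => //= i u IH; rewrite subst_cons has_cat IH. Qed.

Section EquationalTheory.
Variable T : theory.
Hypothesis hT : is_eqtheory T.

Lemma eqt_catr u v w : T u v -> T (u ++ w) (v ++ w).
Proof. by case: w => [|a w] Huv; [rewrite !cats0 | apply: (eqt_mulr hT)]. Qed.

Lemma eqt_catl u v w : T u v -> T (w ++ u) (w ++ v).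
Proof. by case: w => [|a w] Huv //; apply: (eqt_mull hT). Qed.

Lemma eqt_catC a b : a <> [::] -> b <> [::] -> T (a ++ b) (b ++ a).
Proof.
move=> Ha Hb; pose s i : word := if i == 0 then a else b.
have := eqt_subst (s := s) hT (eqt_comm hT); rewrite /subst /= !cats0; apply.
by move=> n; rewrite /s; case: (n == 0).
Qed.

Lemma eqt_perm u v : u <> [::] -> perm_eq u v -> T u v.
Proof.
elim: u v => // i u IH v _ Hp.
have iv : i \in v by rewrite -(perm_mem Hp) mem_head.
case/splitPr: iv Hp => v1 v2 Hp; have Hp' : perm_eq u (v1 ++ v2).
  by rewrite -(perm_cons i) (perm_trans Hp) // -cat1s perm_catCA.
have Hi : T (i :: v1 ++ v2) (v1 ++ i :: v2).
  case: v1 {Hp Hp'} => [|a v1]; first exact: (eqt_refl hT).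
  by rewrite -cat1s -(cat1s i v2) !catA; apply/eqt_catr/eqt_catC.
case: u IH Hp Hp' => [|b u] IH Hp Hp'.
  by move: (perm_size Hp'); case: v1 {Hi Hp Hp'} => //; case: v2 => // _; apply: (eqt_refl hT).
apply: (eqt_trans hT _ Hi); rewrite -cat1s -(cat1s i (v1 ++ v2)).
exact/eqt_catl/IH.
Qed.

End EquationalTheory.

Definition subtheory (T1 T2 : theory) := forall u v, T1 u v -> T2 u v.

Lemma subtheory_refl T : subtheory T T.
Proof. by []. Qed.

Lemma subtheory_trans T1 T2 T3 : subtheory T1 T2 -> subtheory T2 T3 -> subtheory T1 T3.
Proof. by move=> H1 H2 u v /H1 /H2. Qed.

Lemma same_theory_sym T1 T2 : same_theory T1 T2 -> same_theory T2 T1.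
Proof. by move=> H u v; split => /H. Qed.

Lemma same_theory_trans T1 T2 T3 :
  same_theory T1 T2 -> same_theory T2 T3 -> same_theory T1 T3.
Proof. by move=> H1 H2 u v; rewrite H1 H2. Qed.

Lemma same_subtheory T1 T2 : same_theory T1 T2 -> subtheory T1 T2.
Proof. by move=> H u v /H. Qed.

Lemma subtheory_same T1 T2 : subtheory T1 T2 -> subtheory T2 T1 -> same_theory T1 T2.
Proof. by move=> H1 H2 u v; split => [/H1|/H2]. Qed.

Definition nonempty_rel (R : word -> word -> Prop) : theory :=
  fun u v => [/\ u <> [::], v <> [::] & R u v].

Section NonemptyRel.
Variable R : word -> word -> Prop.
Hypothesis R_refl : forall u, R u u.
Hypothesis R_sym : forall u v, R u v -> R v u.
Hypothesis R_trans : forall u v w, R u v -> R v w -> R u w.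
Hypothesis R_catr : forall u v w,
  u <> [::] -> v <> [::] -> w <> [::] -> R u v -> R (u ++ w) (v ++ w).
Hypothesis R_catl : forall u v w,
  u <> [::] -> v <> [::] -> w <> [::] -> R u v -> R (w ++ u) (w ++ v).
Hypothesis R_subst : forall s u v, (forall n, s n <> [::]) ->
  u <> [::] -> v <> [::] -> R u v -> R (subst s u) (subst s v).
Hypothesis R_comm : R [:: 0; 1] [:: 1; 0].

Lemma nonempty_rel_eqtheory : is_eqtheory (nonempty_rel R).
Proof.
split.
- by move=> u v [].
- by move=> u Hu; split.
- by move=> u v [Hu Hv H]; split; last exact: R_sym.
- by move=> u v w [Hu Hv H1] [_ Hw H2]; split; last exact: R_trans H2.
- by move=> u v w [Hu Hv H] Hw; split; [exact: catl_neq0|exact: catl_neq0|exact: R_catr].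
- by move=> u v w [Hu Hv H] Hw; split; [exact: catr_neq0|exact: catr_neq0|exact: R_catl].
- by move=> u v s [Hu Hv H] Hs; split; [exact: subst_neq0|exact: subst_neq0|exact: R_subst].
- by split.
Qed.

End NonemptyRel.

Definition triv_theory : theory := nonempty_rel (fun _ _ => True).

Lemma triv_theory_eqtheory : is_eqtheory triv_theory.
Proof. exact: nonempty_rel_eqtheory. Qed.

Lemma triv_theory_cons i j u v : triv_theory (i :: u) (j :: v).
Proof. by []. Qed.

Lemma sub_triv_theory T : is_eqtheory T -> subtheory T triv_theory.
Proof. by move=> hT u v /(eqt_nonempty hT) []; split. Qed.

(* Identities of A_n: all weighted letter counts agree modulo n. *)
Definition idA (n : nat) : theory := nonempty_rel (fun u v =>
  forall f : nat -> nat, sumn (map f u) = sumn (map f v) %[mod n]).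

(* Identities of SL: both sides have the same letters. *)
Definition idSL : theory := nonempty_rel (fun u v =>
  forall P : pred nat, has P u = has P v).

(* Identities of ZM: trivial ones and those with both sides of length >= 2. *)
Definition idZM : theory := nonempty_rel (fun u v =>
  u = v \/ 1 < size u /\ 1 < size v).

(* Identities of the commutative nil-variety whose words equal to 0 are
   those satisfying [z]. *)
Definition idZero (z : pred word) : theory := nonempty_rel (fun u v =>
  perm_eq u v \/ z u /\ z v).

Lemma modnD_congr n a b c d : a = b %[mod n] -> c = d %[mod n] -> a + c = b + d %[mod n].
Proof. by move=> H1 H2; rewrite -modnDm H1 H2 modnDm. Qed.

Lemma idA_eqtheory n : is_eqtheory (idA n).
Proof.
apply: nonempty_rel_eqtheory.
- by [].
- by move=> u v H f; rewrite H.
- by move=> u v w H1 H2 f; rewrite H1 H2.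
- by move=> u v w _ _ _ H f; rewrite !map_cat !sumn_cat; apply: modnD_congr.
- by move=> u v w _ _ _ H f; rewrite !map_cat !sumn_cat; apply: modnD_congr.
- by move=> s u v _ _ _ H f; rewrite !sumn_subst.
- by move=> f /=; rewrite !addn0 addnC.
Qed.

Lemma idSL_eqtheory : is_eqtheory idSL.
Proof.
apply: nonempty_rel_eqtheory.
- by [].
- by move=> u v H P; rewrite H.
- by move=> u v w H1 H2 P; rewrite H1 H2.
- by move=> u v w _ _ _ H P; rewrite !has_cat H.
- by move=> u v w _ _ _ H P; rewrite !has_cat H.
- by move=> s u v _ _ _ H P; rewrite !has_subst.
- by move=> P /=; rewrite !orbF orbC.
Qed.

Lemma idZM_eqtheory : is_eqtheory idZM.
Proof.
apply: nonempty_rel_eqtheory; first by left.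
- by move=> u v [E|[]]; [left|right].
- move=> u v w [E|[? ?]] [E'|[? ?]]; [left; congruence|right..]; subst => //.
- by move=> u v w _ _ _ [->|[]]; [left|right; rewrite !size_cat; lia].
- by move=> u v w _ _ _ [->|[]]; [left|right; rewrite !size_cat; lia].
- move=> s u v Hs _ _ [->|[]]; [by left|right].
  by have := size_subst u Hs; have := size_subst v Hs; lia.
- by right.
Qed.

Record zero_ideal (z : pred word) : Prop := {
  zero_perm : forall u v, perm_eq u v -> z u -> z v;
  zero_catr : forall u w, z u -> z (u ++ w);
  zero_catl : forall u w, z u -> z (w ++ u);
  zero_subst : forall u s, (forall n, s n <> [::]) -> z u -> z (subst s u)
}.

Lemma idZero_eqtheory z : zero_ideal z -> is_eqtheory (idZero z).
Proof.
move=> Z; apply: nonempty_rel_eqtheory; first by left.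
- by move=> u v [H|[]]; [left; rewrite perm_sym|right].
- move=> u v w [E|[a b]] [E'|[c d]]; [left; exact: perm_trans E E'|..]; right => //.
    by split => //; apply: (zero_perm Z _ c); rewrite perm_sym.
  by split => //; apply: (zero_perm Z E').
- move=> u v w _ _ _ [E|[a b]]; first by left; rewrite perm_cat2r.
  by right; split; apply: (zero_catr Z).
- move=> u v w _ _ _ [E|[a b]]; first by left; rewrite perm_cat2l.
  by right; split; apply: (zero_catl Z).
- move=> s u v Hs _ _ [E|[a b]]; first by left; apply: perm_subst.
  by right; split; apply: (zero_subst Z).
- by left; rewrite (perm_catC [:: 0] [:: 1]).
Qed.

(* The ideals of the nil-varieties given by x_1 x_2 x_3 = 0 and by
   x^2 = 0, x_1 x_2 x_3 x_4 = 0. *)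
Definition zero3 (w : word) : bool := 2 < size w.
Definition zero_sq4 (w : word) : bool := (3 < size w) || ~~ uniq w.

Lemma zero3_ideal : zero_ideal zero3.
Proof.
rewrite /zero3; split.
- by move=> u v /perm_size ->.
- by move=> u w; rewrite size_cat; lia.
- by move=> u w; rewrite size_cat; lia.
- by move=> u s Hs; have := size_subst u Hs; lia.
Qed.

Lemma not_uniq_perm (u : word) : ~~ uniq u -> exists i r, perm_eq u (i :: i :: r).
Proof.
elim: u => // a u IH /=; rewrite negb_and negbK => /orP [au|nu].
  by exists a, (rem a u); rewrite perm_cons; apply: perm_to_rem.
have [i [r Hp]] := IH nu; exists i, (a :: r).
apply: (@perm_trans _ ([:: a] ++ [:: i; i] ++ r)); first by rewrite /= perm_cons.
by rewrite perm_catCA.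
Qed.

Lemma zero_sq4_ideal : zero_ideal zero_sq4.
Proof.
rewrite /zero_sq4; split.
- by move=> u v Hp; rewrite (perm_size Hp) (perm_uniq Hp).
- move=> u w /orP [H|H]; apply/orP; first by left; rewrite size_cat; lia.
  by right; apply: contra H; rewrite cat_uniq => /and3P [].
- move=> u w /orP [H|H]; apply/orP; first by left; rewrite size_cat; lia.
  by right; apply: contra H; rewrite cat_uniq => /and3P [].
- move=> u s Hs /orP [H|H]; apply/orP; first by left; have := size_subst u Hs; lia.
  right; have [i [r Hp]] := not_uniq_perm H.
  rewrite (perm_uniq (perm_subst s Hp)) !subst_cons.
  case E: (s i) (Hs i) => [|k t] // _.
  by rewrite /= mem_cat in_cons eqxx orbT.
Qed.

Definition idZ3 := idZero zero3.
Definition idZsq4 := idZero zero_sq4.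

(** * Varieties containing neither SL nor ZM *)

Lemma ex_least_pos (Q : nat -> Prop) : (exists d, 0 < d /\ Q d) ->
  exists n, [/\ 0 < n, Q n & forall d, 0 < d < n -> ~ Q d].
Proof.
case=> d [d_gt0 Qd]; elim: d {-2}d (leqnn d) d_gt0 Qd => [|N IH] d ledN d_gt0 Qd.
  by move: ledN d_gt0; lia.
have [[d' [Hd' Qd']]|nQ] := classic (exists d', 0 < d' < d /\ Q d').
  by apply: (IH d') => //; lia.
by exists d; split => // d' Hd' Qd'; apply: nQ; exists d'.
Qed.

Section PeriodicTheory.
Variable T : theory.
Hypothesis hT : is_eqtheory T.

Definition least_period n := forall d, 0 < d < n -> ~ T (xpow 1) (xpow d.+1).

Lemma eqt_xpow_period n : T (xpow 1) (xpow n.+1) ->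
  forall j t, 0 < j -> T (xpow j) (xpow (j + t * n)).
Proof.
move=> Tn j t j_gt0; elim: t => [|t IH]; first by rewrite addn0; apply/(eqt_refl hT)/xpow_neq0.
apply: (eqt_trans hT IH); set m := (j + t * n).-1.
have -> : xpow (j + t * n) = xpow m ++ xpow 1 by rewrite -xpowD /m; congr xpow; lia.
have -> : xpow (j + t.+1 * n) = xpow m ++ xpow n.+1.
  by rewrite -xpowD /m mulSn; congr xpow; lia.
exact: eqt_catl.
Qed.

Lemma eqt_nseq_period n i : T (xpow 1) (xpow n.+1) ->
  forall j t, 0 < j -> T (nseq j i) (nseq (j + t * n) i).
Proof.
move=> Tn j t j_gt0; rewrite -!subst_xpow_letter.
exact: (eqt_subst hT (eqt_xpow_period Tn t j_gt0)).
Qed.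

Lemma eqt_letters_triv a b : a <> b -> T [:: a] [:: b] -> subtheory triv_theory T.
Proof.
move=> neq_ab Tab u v [Hu Hv _]; pose s k := if k == a then u else v.
have := eqt_subst (s := s) hT Tab; rewrite /subst /= !cats0 /s eqxx.
have -> : (b == a) = false by apply/eqP => E; apply: neq_ab.
by apply=> k; case: (k == a).
Qed.

Lemma eqt_letter_periodic i v : T [:: i] v -> [:: i] <> v ->
  exists d, 0 < d /\ T (xpow 1) (xpow d.+1).
Proof.
move=> Tiv neq_iv; have [_ Hv] := eqt_nonempty hT Tiv.
have Tx : T (xpow 1) (xpow (size v)).
  have := eqt_subst (s := fun=> [:: 0]) hT Tiv.
  by rewrite !subst_const //; apply.
case: v Tiv neq_iv Hv Tx => [|j [|k v]] // Tiv neq_iv _ Tx; last by exists (size v).+1.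
exists 1; split => //; apply: (eqt_letters_triv (a := i) (b := j)) => //.
by move=> E; apply: neq_iv; rewrite E.
Qed.

Lemma not_sub_idZM_periodic : ~ subtheory T idZM ->
  exists d, 0 < d /\ T (xpow 1) (xpow d.+1).
Proof.
move=> nZM; apply: NNPP => nper; apply: nZM => u v Tuv.
have [Hu Hv] := eqt_nonempty hT Tuv; split => //.
apply: NNPP => /not_or_and [neq_uv short].
have size1 (w : word) : w <> [::] -> size w <= 1 -> exists i, w = [:: i].
  by case: w => [|i [|k w]] // _ _; first exists i.
have [/(size1 _ Hu) [i Eu]|/(size1 _ Hv) [i Ev]] : size u <= 1 \/ size v <= 1 by lia.
  by apply: nper; apply: (eqt_letter_periodic (i := i) (v := v)); rewrite -?Eu.
apply: nper; apply: (eqt_letter_periodic (i := i) (v := u)); rewrite -?Ev //.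
  exact: eqt_sym.
by move=> E; apply: neq_uv.
Qed.

Lemma least_period_exists : ~ subtheory T idZM ->
  exists n, [/\ 0 < n, T (xpow 1) (xpow n.+1) & least_period n].
Proof. by move/not_sub_idZM_periodic/ex_least_pos. Qed.

Section LeastPeriod.
Variable n : nat.
Hypotheses (n_gt0 : 0 < n) (Tn : T (xpow 1) (xpow n.+1)) (n_least : least_period n).

(* If x^a = x^b with b - a = r (mod n), 0 < r < n, multiplying by a
   suitable power of x turns it into x = x^(r+1). *)
Lemma eqt_xpow_mod a b : 0 < a -> 0 < b -> T (xpow a) (xpow b) -> a = b %[mod n].
Proof.
wlog ab : a b / a <= b.
  move=> IH a_gt0 b_gt0 Tab; have [|ba] := leqP a b; first by move/IH; apply.
  by symmetry; apply: IH => //; [exact: ltnW | exact: eqt_sym].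
move=> a_gt0 _ Tab; set c := b - a; set r := c %% n.
have [r0|r_gt0] := posnP r.
  by rewrite -(subnKC ab) -/c -modnDmr -/r r0 addn0.
exfalso; apply: (n_least (d := r)); first by rewrite r_gt0 ltn_pmod.
have an : a <= a * n by rewrite leq_pmulr.
set e := 1 + a * n - a.
have Te : T (xpow (e + a)) (xpow (e + b)) by rewrite !xpowD; apply: (eqt_catl hT).
have Ea : e + a = 1 + a * n by rewrite /e; lia.
have Eb : e + b = r.+1 + (a + c %/ n) * n.
  by have := divn_eq c n; rewrite /e /r /c mulnDl; lia.
rewrite Ea Eb in Te.
apply: (eqt_trans hT (eqt_xpow_period Tn a (ltn0Sn 0))).
apply: (eqt_trans hT Te); apply: (eqt_sym hT); exact: eqt_xpow_period.
Qed.

Lemma sumn_map_addn (f : nat -> nat) k (u : word) :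
  sumn (map (fun i => f i + k) u) = sumn (map f u) + size u * k.
Proof. by elim: u => //= i u ->; rewrite mulSn; lia. Qed.

(* Substitute x_0^(f i + n) for x_i. *)
Lemma sub_idA_least_period : subtheory T (idA n).
Proof.
move=> u v Tuv; have [Hu Hv] := eqt_nonempty hT Tuv; split => // f.
have Hs k : xpow (f k + n) <> [::] by apply: xpow_neq0; lia.
have := eqt_subst hT Tuv Hs; rewrite !subst_xpow => Tf.
have pos (w : word) : w <> [::] -> 0 < sumn (map (fun i => f i + n) w).
  by case: w => //= i w _; lia.
have := eqt_xpow_mod (pos u Hu) (pos v Hv) Tf.
by rewrite !sumn_map_addn -!(modnDmr _ (_ * n)) !modnMl !addn0.
Qed.

End LeastPeriod.

End PeriodicTheory.

Lemma perm_nseq01 (w : word) : all (fun k => k < 2) w ->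
  perm_eq w (nseq (count_mem 0 w) 0 ++ nseq (count_mem 1 w) 1).
Proof.
elim: w => //= k w IH /andP [+ /IH {}IH]; case: k => [|[|//]] _ /=.
  by rewrite add0n perm_cons.
apply: (@perm_trans _ ([:: 1] ++ nseq (count_mem 0 w) 0 ++ nseq (count_mem 1 w) 1)).
  by rewrite /= perm_cons.
by rewrite perm_catCA.
Qed.

Lemma count_flatten_nseq_iota (c : nat -> nat) k m N :
  count_mem k (flatten [seq nseq (c j) j | j <- iota m N]) =
  if m <= k < m + N then c k else 0.
Proof.
elim: N m => [|N IH] m /=; first by case: ifP => //; lia.
rewrite count_cat count_nseq IH /=; have [->|km] := eqVneq k m.
  by rewrite mul1n ltnn /= leqnn addn0 /=; case: ifP => //; lia.
by rewrite mul0n add0n; case: ifP; case: ifP => // h1 h2; exfalso; move: h1 h2 km; lia.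
Qed.

Lemma leq_mem_sumn (w : word) k : k \in w -> k <= sumn w.
Proof. by elim: w => //= a w IH; rewrite in_cons => /orP [/eqP ->|/IH]; lia. Qed.

Lemma sumn_eq_count (u : word) k : sumn [seq (i == k : nat) | i <- u] = count_mem k u.
Proof. by elim: u => //= a u ->; rewrite eq_sym. Qed.

Section SubtheoryStructure.
Variable T : theory.
Hypothesis hT : is_eqtheory T.

(* Send a letter occurring only on the left to y = x_1, all others to x_0. *)
Lemma not_sub_idSL_witness : ~ subtheory T idSL ->
  exists a b c, [/\ 0 < b, 0 < c & T (nseq a 0 ++ nseq b 1) (xpow c)].
Proof.
move=> nSL.
have witness u v j : T u v -> j \in u -> j \notin v ->
    exists a b c, [/\ 0 < b, 0 < c & T (nseq a 0 ++ nseq b 1) (xpow c)].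
  move=> Tuv ju jv; have [Hu Hv] := eqt_nonempty hT Tuv.
  pose s k := if k == j then [:: 1] else [:: 0].
  have Hs n : s n <> [::] by rewrite /s; case: (n == j).
  have := eqt_subst hT Tuv Hs; rewrite (subst_const (v := v)); last first.
    by move=> k kv; rewrite /s; case: eqP => // E; move: jv; rewrite -E kv.
  set w := subst s u => Tw.
  have w01 : all (fun k => k < 2) w.
    by rewrite /w; elim: (u) => //= k u' IH; rewrite subst_cons all_cat IH /s; case: (k == j).
  have w1 : 0 < count_mem 1 w.
    by rewrite -has_count /w has_subst; apply/hasP; exists j => //; rewrite /s eqxx.
  exists (count_mem 0 w), (count_mem 1 w), (size v); split => //; first by case: (v) Hv.
  apply: (eqt_trans hT _ Tw); apply: (eqt_sym hT); apply: (eqt_perm hT); last exact: perm_nseq01.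
  exact: subst_neq0.
apply: NNPP => nE; apply: nSL => u v Tuv; have [Hu Hv] := eqt_nonempty hT Tuv.
split => // P; apply: NNPP => nP.
case Eu: (has P u) nP; case Ev: (has P v) => // _.
  case/hasP: Eu => j ju Pj; apply: nE; apply: (witness u v j) => //.
  by apply/negP => jv; move/negP: Ev; apply; apply/hasP; exists j.
case/hasP: Ev => j jv Pj; apply: nE; apply: (witness v u j) => //; first exact: (eqt_sym hT).
by apply/negP => ju; move/negP: Eu; apply; apply/hasP; exists j.
Qed.

(* Multiplying x^a y^b = x^c by a power of x gives x^e y^b = x; substituting
   x^d for x and using x^d = x^(e d) then yields x^d y^b = x^d. *)
Lemma not_sub_idSL_xyn d : 0 < d -> T (xpow 1) (xpow d.+1) -> ~ subtheory T idSL ->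
  exists m, 0 < m /\ T (0 :: nseq m 1) [:: 0].
Proof.
move=> d_gt0 Td nSL; have [a [b [c [b_gt0 c_gt0 Tabc]]]] := not_sub_idSL_witness nSL.
have cd : c <= c * d by rewrite leq_pmulr.
set e := 1 + c * d - c.
have Tx : T (xpow (e + a) ++ nseq b 1) (xpow 1).
  apply: (eqt_trans hT (v := xpow (e + c))); first by rewrite !xpowD -catA; apply: (eqt_catl hT).
  have -> : e + c = 1 + c * d by rewrite /e; lia.
  by apply: (eqt_sym hT); apply: eqt_xpow_period.
pose s k := if k == 0 then xpow d else [:: 1].
have Hs k : s k <> [::] by rewrite /s; case: (k == 0) => //; apply: xpow_neq0.
have := eqt_subst hT Tx Hs.
rewrite subst_cat /xpow !subst_nseq flatten_nseq_nseq /= cats0.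
have -> : flatten (nseq b [:: 1]) = nseq b 1 by elim: (b) => //= b' ->.
move=> Tsx.
have Tpow : T (xpow d) (xpow ((e + a) * d)).
  have -> : (e + a) * d = d + (e + a).-1 * d by rewrite -mulSn; congr (_ * _); lia.
  exact: eqt_xpow_period.
have Txd : T (xpow d ++ nseq b 1) (xpow d) by apply: (eqt_trans hT (eqt_catr hT _ Tpow) Tsx).
exists b; split => //.
have := eqt_catl hT (xpow 1) Txd; rewrite catA -!xpowD add1n => Tx1.
apply: (eqt_trans hT (eqt_catr hT (nseq b 1) Td)); apply: (eqt_trans hT Tx1).
exact: (eqt_sym hT).
Qed.

Lemma eqt_xyn_of_period n m : T (xpow 1) (xpow n.+1) -> 0 < m ->
  T (0 :: nseq m 1) [:: 0] -> T (0 :: nseq n 1) [:: 0].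
Proof.
move=> Tn m_gt0 Tm.
have : T ([:: 0] ++ nseq n 1) ((0 :: nseq m 1) ++ nseq n 1).
  by apply: (eqt_catr hT); apply: (eqt_sym hT).
rewrite /= -nseqD => Tmn.
apply: (eqt_trans hT Tmn); apply: (eqt_trans hT _ Tm); apply: (eqt_sym hT).
have := eqt_nseq_period hT 1 Tn 1 m_gt0; rewrite mul1n => Tm1.
exact: (eqt_catl hT [:: 0] Tm1).
Qed.

Section Absorb.
Variable n : nat.
Hypothesis Tn : T (0 :: nseq n 1) [:: 0].

Lemma eqt_absorb_nseq k u : u <> [::] -> T u (u ++ nseq n k).
Proof.
move=> Hu; pose s i := if i == 0 then u else [:: k].
have Hs i : s i <> [::] by rewrite /s; case: (i == 0).
have := eqt_subst hT Tn Hs; rewrite !subst_cons /= subst_nseq cats0.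
have -> : flatten (nseq n (s 1)) = nseq n k by rewrite /s /=; elim: (n) => //= n' ->.
exact: (eqt_sym hT).
Qed.

Lemma eqt_absorb_nseqM k u t : u <> [::] -> T u (u ++ nseq (t * n) k).
Proof.
move=> Hu; elim: t => [|t IH]; first by rewrite mul0n cats0; apply: (eqt_refl hT).
rewrite mulSnr nseqD catA; apply: (eqt_trans hT IH).
exact/eqt_absorb_nseq/catl_neq0.
Qed.

Lemma eqt_absorb_flatten (c : nat -> nat) L u : (forall k, n %| c k) -> u <> [::] ->
  T u (u ++ flatten [seq nseq (c k) k | k <- L]).
Proof.
move=> Hc; elim: L u => [|a L IH] u Hu; first by rewrite cats0; apply: (eqt_refl hT).
rewrite /= catA; apply: (eqt_trans hT (v := u ++ nseq (c a) a)).
  by rewrite -(divnK (Hc a)); apply: eqt_absorb_nseqM.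
exact/IH/catl_neq0.
Qed.

(* Pad both sides to the same multiset of letters. *)
Lemma idA_sub_of_xyn : subtheory (idA n) T.
Proof.
move=> u v [Hu Hv Hf].
have Hc k : count_mem k u = count_mem k v %[mod n] by rewrite -!sumn_eq_count; apply: Hf.
pose cu k := count_mem k v - count_mem k u; pose cv k := count_mem k u - count_mem k v.
have dvd_sub (k : nat) (i j : word) :
    count_mem k i = count_mem k j %[mod n] -> n %| count_mem k j - count_mem k i.
  move=> E; case: (leqP (count_mem k i) (count_mem k j)) => h; first by rewrite -eqn_mod_dvd // E.
  by rewrite (_ : _ - _ = 0) //; lia.
set N := sumn u + sumn v + 1.
have Tu := eqt_absorb_flatten (c := cu) (iota 0 N) (fun k => dvd_sub k u v (Hc k)) Hu.
have Tv := eqt_absorb_flatten (c := cv) (iota 0 N) (fun k => dvd_sub k v u (esym (Hc k))) Hv.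
apply: (eqt_trans hT Tu); apply: (eqt_trans hT _ (eqt_sym hT Tv)).
apply: (eqt_perm hT); first exact: catl_neq0.
apply/allP => k _; apply/eqP; rewrite !count_cat !count_flatten_nseq_iota /cu /cv add0n.
case: ifP => hk; first lia.
have absent w : k \in w -> sumn w < N -> False by move/leq_mem_sumn; lia.
have /count_memPn -> : k \notin u by apply/negP => /absent; rewrite /N; lia.
by have /count_memPn -> : k \notin v by apply/negP => /absent; rewrite /N; lia.
Qed.

End Absorb.

Lemma eqt_idem_rcons k u : T (xpow 1) (xpow 2) -> k \in u -> T u (u ++ [:: k]).
Proof.
move=> T2 ku; have Hu : u <> [::] by case: (u) ku.
apply: (eqt_trans hT (v := k :: rem k u)); first exact/(eqt_perm hT)/perm_to_rem.
have Tk : T [:: k] [:: k; k] by have := eqt_subst (s := fun=> [:: k]) hT T2; apply.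
apply: (eqt_trans hT (eqt_catr hT (rem k u) Tk)); apply: (eqt_perm hT) => //.
apply: (@perm_trans _ ([:: k] ++ u)); last by rewrite perm_catC.
by rewrite /= perm_cons perm_sym perm_to_rem.
Qed.

Lemma idSL_sub_of_idem : T (xpow 1) (xpow 2) -> subtheory idSL T.
Proof.
move=> T2.
have absorb w u : u <> [::] -> {subset w <= u} -> T u (u ++ w).
  elim: w u => [|k w IH] u Hu Hw; first by rewrite cats0; apply: (eqt_refl hT).
  apply: (eqt_trans hT (eqt_idem_rcons T2 (Hw k (mem_head _ _)))).
  rewrite -(cat1s k w) catA; apply: IH; first exact: catl_neq0.
  by move=> k' k'w; rewrite mem_cat Hw // in_cons k'w orbT.
move=> u v [Hu Hv HP].
have sub (w w' : word) : (forall P : pred nat, has P w = has P w') -> {subset w <= w'}.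
  move=> H k kw; have /hasP [k' k'w' /eqP <-] // : has (pred1 k) w'.
  by rewrite -H; apply/hasP; exists k => /=.
apply: (eqt_trans hT (absorb v u Hu (sub _ _ (fun P => esym (HP P))))).
apply: (eqt_trans hT _ (eqt_sym hT (absorb u v Hv (sub _ _ HP)))).
by apply: (eqt_perm hT); [exact: catl_neq0|rewrite perm_catC].
Qed.

Lemma same_idA_of_not_sub : ~ subtheory T idZM -> ~ subtheory T idSL ->
  exists n, 0 < n /\ same_theory T (idA n).
Proof.
move=> nZM nSL; have [n [n_gt0 Tn n_least]] := least_period_exists hT nZM.
have [m [m_gt0 Tm]] := not_sub_idSL_xyn n_gt0 Tn nSL.
exists n; split => //; apply: subtheory_same; first exact: sub_idA_least_period.
exact/idA_sub_of_xyn/(eqt_xyn_of_period Tn m_gt0 Tm).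
Qed.

End SubtheoryStructure.

(** * Atoms of Com *)

(* [com_le A B] : the variety of A is contained in that of B. *)
Definition com_le (A B : theory) := subtheory B A.
Definition com_bot (A : theory) := subtheory triv_theory A.
Definition com_atom (A : theory) := ~ com_bot A /\
  forall Y, is_eqtheory Y -> com_le Y A -> com_bot Y \/ same_theory Y A.
Definition only_atom (Y A : theory) :=
  forall B, is_eqtheory B -> com_atom B -> com_le B Y -> same_theory B A.
Definition SL_like (A : theory) :=
  com_atom A /\ forall Y, is_eqtheory Y -> only_atom Y A -> com_le Y A.
Definition ZM_like (A : theory) := com_atom A /\ exists Y Z,
  [/\ is_eqtheory Y /\ is_eqtheory Z, only_atom Y A, only_atom Z A,
      ~ com_le Y Z & ~ com_le Z Y].

Lemma com_bot_same A B : same_theory A B -> com_bot A -> com_bot B.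
Proof. by move=> E Z; apply: subtheory_trans Z (same_subtheory E). Qed.

Lemma com_atom_same A B : same_theory A B -> com_atom A -> com_atom B.
Proof.
move=> E [nZ HA]; split; first by move/(com_bot_same (same_theory_sym E)).
move=> Y hY YB; case: (HA Y hY (subtheory_trans (same_subtheory E) YB)) => [|EY]; first by left.
by right; apply: same_theory_trans EY E.
Qed.

Lemma only_atom_same Y A B : same_theory A B -> only_atom Y A -> only_atom Y B.
Proof. by move=> E O C hC atC CY; apply: same_theory_trans (O C hC atC CY) E. Qed.

Lemma sumn_map_nseq (f : nat -> nat) k i : sumn (map f (nseq k i)) = k * f i.
Proof. by elim: k => //= k ->; rewrite mulSn. Qed.

Lemma idA_size n u v : idA n u v -> size u = size v %[mod n].
Proof.
have sumn1 (w : word) : sumn (map (fun=> 1) w) = size w by elim: w => //= a w ->.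
by move=> [_ _ /(_ (fun=> 1))]; rewrite !sumn1.
Qed.

Lemma eqn_modDr q a k : 0 < k < q -> a = a + k %[mod q] -> False.
Proof.
move=> Hk /esym/eqP; rewrite eqn_mod_dvd; last by lia.
by rewrite (_ : a + k - a = k) //; [move/dvdn_leq; lia | lia].
Qed.

Lemma idA_xpow n : idA n (xpow 1) (xpow n.+1).
Proof. by split => // f; rewrite !sumn_map_nseq mul1n mulSn -modnDmr mulnC modnMl addn0. Qed.

Lemma idA_xyn n : idA n (0 :: nseq n 1) [:: 0].
Proof. by split => // f /=; rewrite sumn_map_nseq addn0 -modnDmr mulnC modnMl addn0. Qed.

Lemma idA_dvd m n : m %| n -> subtheory (idA n) (idA m).
Proof. by move=> mn u v [Hu Hv Hf]; split => // f; rewrite -(modn_dvdm _ mn) Hf modn_dvdm. Qed.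

Lemma dvdn_idA m n : 0 < n -> subtheory (idA n) (idA m) -> m %| n.
Proof.
move=> n_gt0 /(_ _ _ (idA_xpow n)) /idA_size; rewrite !size_nseq.
by move/eqP; rewrite eq_sym eqn_mod_dvd // subSS subn0.
Qed.

Lemma idA1_triv : same_theory (idA 1) triv_theory.
Proof. by move=> u v; split => [[]|[Hu Hv _]]; split => // f; rewrite !modn1. Qed.

Lemma idA_not_bot p : 1 < p -> ~ com_bot (idA p).
Proof.
move=> p_gt1 Z; have /idA_size /= := Z [:: 0] [:: 0; 0] (triv_theory_cons _ _ _ _).
by apply: (eqn_modDr (a := 1) (k := 1)).
Qed.

Lemma idSL_not_bot : ~ com_bot idSL.
Proof. by move=> /(_ [:: 0] [:: 1] (triv_theory_cons _ _ _ _)) [_ _ /(_ (pred1 1))]. Qed.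

Lemma idZM_not_bot : ~ com_bot idZM.
Proof. by move=> /(_ [:: 0] [:: 1] (triv_theory_cons _ _ _ _)) [_ _ [|[]]]. Qed.

Lemma idA_sub_not_sub_idZM Y p : 0 < p -> subtheory (idA p) Y -> ~ subtheory Y idZM.
Proof.
move=> p_gt0 AY /(_ _ _ (AY _ _ (idA_xpow p))) [_ _ [/(congr1 size)|[]]].
  by rewrite !size_nseq; lia.
by rewrite size_nseq.
Qed.

Lemma idA_sub_not_sub_idSL Y p : 0 < p -> subtheory (idA p) Y -> ~ subtheory Y idSL.
Proof.
move=> p_gt0 AY /(_ _ _ (AY _ _ (idA_xyn p))) [_ _ /(_ (pred1 1))].
by rewrite /= has_nseq; case: (p) p_gt0.
Qed.

Lemma not_sub_idZM_cases Y : is_eqtheory Y -> ~ subtheory Y idZM ->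
  subtheory idSL Y \/ exists2 p, prime p & subtheory Y (idA p).
Proof.
move=> hY nZM; have [n [n_gt0 Yn n_least]] := least_period_exists hY nZM.
have [n1|n_neq1] := eqVneq n 1; first by left; apply: (idSL_sub_of_idem hY); rewrite n1 in Yn.
right; exists (pdiv n); first by apply: pdiv_prime; lia.
exact: subtheory_trans (sub_idA_least_period hY n_gt0 Yn n_least) (idA_dvd (pdiv_dvd n)).
Qed.

Lemma com_atom_idA p : prime p -> com_atom (idA p).
Proof.
move=> p_pr; have p_gt1 := prime_gt1 p_pr; split; first exact: idA_not_bot.
move=> Y hY YA; have nZM := idA_sub_not_sub_idZM (ltnW p_gt1) YA.
have [n [n_gt0 Yn n_least]] := least_period_exists hY nZM.
have YAn := sub_idA_least_period hY n_gt0 Yn n_least.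
have np : n %| p by apply: dvdn_idA; [exact: ltnW | exact: subtheory_trans YA YAn].
have [n1|n_neq1] := eqVneq n 1.
  left; apply: subtheory_trans (same_subtheory (same_theory_sym idA1_triv)) _.
  have := eqt_xyn_of_period hY Yn (ltnW p_gt1) (YA _ _ (idA_xyn p)).
  by rewrite n1; apply: idA_sub_of_xyn.
by move/(prime_nt_dvdP p_pr n_neq1): np YAn => -> YAp; right; apply: subtheory_same.
Qed.

(* A proper subvariety of SL is trivial: it satisfies xy = x, hence x = y. *)
Lemma com_atom_idSL : com_atom idSL.
Proof.
split; first exact: idSL_not_bot.
move=> Y hY SLY; have [YSL|nSL] := classic (subtheory Y idSL).
  by right; apply: subtheory_same.
left; have [a [b [c [b_gt0 c_gt0 Yabc]]]] := not_sub_idSL_witness hY nSL.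
have Y1 : Y (nseq a 0 ++ nseq b 1 ++ [:: 0]) [:: 0; 1].
  apply: SLY; split => // [|P]; first by case: (a); case: (b) b_gt0.
  rewrite !has_cat !has_nseq /= b_gt0.
  by case: (P 0); case: (P 1); rewrite ?andbF ?andbT ?orbT ?orbF.
have Y2 : Y (xpow c ++ [:: 0]) [:: 0].
  by apply: SLY; split => // [|P]; [case: (c) c_gt0 | rewrite has_cat has_nseq c_gt0 /= orbF orbb].
have Yxy : Y [:: 0; 1] [:: 0].
  apply: (eqt_trans hY (eqt_sym hY Y1)); apply: (eqt_trans hY _ Y2).
  by rewrite catA; apply: (eqt_catr hY).
have Yyx : Y [:: 1; 0] [:: 1].
  have := eqt_subst (s := fun k => if k == 0 then [:: 1] else [:: 0]) hY Yxy.
  by apply=> k; case: (k == 0).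
apply: (eqt_letters_triv hY (a := 0) (b := 1)) => //.
by apply: (eqt_trans hY (eqt_sym hY Yxy)); apply: (eqt_trans hY (eqt_comm hY)).
Qed.

(* A proper subvariety of ZM satisfies x = x^(d+1) = y^2, so it is trivial. *)
Lemma com_atom_idZM : com_atom idZM.
Proof.
split; first exact: idZM_not_bot.
move=> Y hY ZMY; have [YZM|nZM] := classic (subtheory Y idZM).
  by right; apply: subtheory_same.
left; have [d [d_gt0 Yd]] := not_sub_idZM_periodic hY nZM.
have Y2 : Y (xpow d.+1) [:: 1; 1] by apply: ZMY; split => //; right; rewrite size_nseq.
have Y3 := eqt_trans hY Yd Y2.
have Y4 : Y [:: 2] [:: 1; 1].
  have := eqt_subst (s := fun k => if k == 0 then [:: 2] else [:: 1]) hY Y3.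
  by apply=> k; case: (k == 0).
by apply: (eqt_letters_triv hY (a := 0) (b := 2)) => //; apply: (eqt_trans hY Y3 (eqt_sym hY Y4)).
Qed.

Lemma com_atom_cases A : is_eqtheory A -> com_atom A ->
  [\/ same_theory A idZM, same_theory A idSL | exists2 p, prime p & same_theory A (idA p)].
Proof.
move=> hA [nbot atA]; have [AZM|nZM] := classic (subtheory A idZM).
  case: (atA _ idZM_eqtheory AZM) => [/idZM_not_bot|E] //.
  by constructor 1; apply: same_theory_sym.
case: (not_sub_idZM_cases hA nZM) => [SLA|[p p_pr Ap]].
  by case: (proj2 com_atom_idSL A hA SLA) => // ?; constructor 2.
constructor 3; exists p => //.
case: (atA _ (idA_eqtheory p) Ap) => [/(idA_not_bot (prime_gt1 p_pr))|E] //.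
exact: same_theory_sym.
Qed.

Lemma idZM_neq_idSL : ~ same_theory idZM idSL.
Proof.
have : idZM [:: 0; 0] [:: 0; 1] by split => //; right.
by move=> + E => /E [_ _ /(_ (pred1 1))].
Qed.

Lemma idA_neq_idSL p : 0 < p -> ~ same_theory (idA p) idSL.
Proof.
move=> p_gt0 E.
exact: (idA_sub_not_sub_idSL p_gt0 (@subtheory_refl (idA p)) (same_subtheory E)).
Qed.

Lemma idA_neq_idZM p : 0 < p -> ~ same_theory (idA p) idZM.
Proof.
move=> p_gt0 E.
exact: (idA_sub_not_sub_idZM p_gt0 (@subtheory_refl (idA p)) (same_subtheory E)).
Qed.

Lemma com_bot_le Y Z : is_eqtheory Z -> com_bot Y -> com_le Y Z.
Proof. by move=> hZ Ybot; apply: subtheory_trans (sub_triv_theory hZ) Ybot. Qed.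

Lemma only_atom_idSL Y : is_eqtheory Y -> only_atom Y idSL -> com_le Y idSL.
Proof.
move=> hY O; have [YZM|nZM] := classic (subtheory Y idZM).
  by case: idZM_neq_idSL; apply: O => //; [exact: idZM_eqtheory|exact: com_atom_idZM].
case: (not_sub_idZM_cases hY nZM) => [//|[p p_pr Yp]].
by case: (idA_neq_idSL (prime_gt0 p_pr)); apply: O Yp; [exact: idA_eqtheory|exact: com_atom_idA].
Qed.

Lemma only_atom_idA Y p : prime p -> is_eqtheory Y -> only_atom Y (idA p) ->
  exists i, same_theory Y (idA (p ^ i)).
Proof.
move=> p_pr hY O; have p_gt0 := prime_gt0 p_pr.
have [YZM|nZM] := classic (subtheory Y idZM).
  case: (idA_neq_idZM p_gt0); apply: same_theory_sym.
  by apply: O => //; [exact: idZM_eqtheory|exact: com_atom_idZM].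
have [YSL|nSL] := classic (subtheory Y idSL).
  case: (idA_neq_idSL p_gt0); apply: same_theory_sym.
  by apply: O => //; [exact: idSL_eqtheory|exact: com_atom_idSL].
have [n [n_gt0 E]] := same_idA_of_not_sub hY nZM nSL.
have pn : p.-nat n.
  apply/pnatP => // q q_pr qn.
  have Yq : subtheory Y (idA q) := subtheory_trans (same_subtheory E) (idA_dvd qn).
  have /same_subtheory /(dvdn_idA (prime_gt0 q_pr)) := O _ (idA_eqtheory q) (com_atom_idA q_pr) Yq.
  by rewrite dvdn_prime2 // => /eqP ->; rewrite inE.
by exists (logn p n); rewrite -p_part part_pnat_id.
Qed.

Lemma only_atom_idA_pow p i : prime p -> only_atom (idA (p ^ i)) (idA p).
Proof.
move=> p_pr B hB atB BA; have pi_gt0 : 0 < p ^ i by rewrite expn_gt0 prime_gt0.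
case: (com_atom_cases hB atB) => [E|E|[q q_pr E]].
- case: (idA_sub_not_sub_idZM pi_gt0 (@subtheory_refl (idA (p ^ i)))).
  exact: subtheory_trans BA (same_subtheory E).
- case: (idA_sub_not_sub_idSL pi_gt0 (@subtheory_refl (idA (p ^ i)))).
  exact: subtheory_trans BA (same_subtheory E).
- have : q %| p ^ i by apply: (dvdn_idA pi_gt0); apply: subtheory_trans BA (same_subtheory E).
  by rewrite Euclid_dvdX // dvdn_prime2 // => /andP [/eqP <- _].
Qed.

Lemma only_atom_idZM Y : is_eqtheory Y -> ~ subtheory Y idSL ->
  (forall q, 1 < q -> ~ subtheory Y (idA q)) -> only_atom Y idZM.
Proof.
move=> hY nSL nA B hB atB BY; case: (com_atom_cases hB atB) => [//|E|[q q_pr E]].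
  by case: nSL; apply: subtheory_trans BY (same_subtheory E).
by case: (nA q (prime_gt1 q_pr)); apply: subtheory_trans BY (same_subtheory E).
Qed.

Lemma only_atom_idZ3 : only_atom idZ3 idZM.
Proof.
apply: only_atom_idZM; first exact: idZero_eqtheory zero3_ideal.
  have : idZ3 [:: 0; 1; 2] [:: 0; 1; 3] by split => //; right.
  by move=> + H => /H [_ _ /(_ (pred1 2))].
move=> q q_gt1 H; have : idZ3 [:: 0; 0; 0] [:: 0; 0; 0; 0] by split => //; right.
by move/H/idA_size => /= E; apply: (eqn_modDr (a := 3) (k := 1) (q := q)).
Qed.

Lemma only_atom_idZsq4 : only_atom idZsq4 idZM.
Proof.
apply: only_atom_idZM; first exact: idZero_eqtheory zero_sq4_ideal.
  have : idZsq4 [:: 0; 0] [:: 1; 1; 1; 1] by split => //; right.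
  by move=> + H => /H [_ _ /(_ (pred1 1))].
move=> q q_gt1 H; have : idZsq4 [:: 0; 0] [:: 0; 0; 0] by split => //; right.
by move/H/idA_size => /= E; apply: (eqn_modDr (a := 2) (k := 1) (q := q)).
Qed.

Lemma idZ3_idZsq4_incomparable : ~ com_le idZ3 idZsq4 /\ ~ com_le idZsq4 idZ3.
Proof.
split.
  have : idZsq4 [:: 0; 0] [:: 1; 1; 1; 1] by split => //; right.
  by move=> + H => /H [_ _ [|[]]].
have : idZ3 [:: 0; 1; 2] [:: 0; 1; 3] by split => //; right.
by move=> + H => /H [_ _ [|[]]].
Qed.

Lemma SL_like_iff A : is_eqtheory A -> SL_like A <-> same_theory A idSL.
Proof.
move=> hA; split; last first.
  move=> E; split; first exact: com_atom_same (same_theory_sym E) com_atom_idSL.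
  move=> Y hY OY.
  exact: subtheory_trans (same_subtheory E) (only_atom_idSL hY (only_atom_same E OY)).
case=> atA leA; case: (com_atom_cases hA atA) => [E|//|[p p_pr E]]; exfalso.
  have := leA _ (idZero_eqtheory zero3_ideal) (only_atom_same (same_theory_sym E) only_atom_idZ3).
  have : A [:: 0; 1] [:: 2; 3] by apply/E; split => //; right.
  by move=> + H => /H [_ _ [|[]]].
have O := only_atom_same (same_theory_sym E) (only_atom_idA_pow (i := 2) p_pr).
have /(subtheory_trans (same_subtheory (same_theory_sym E))) := leA _ (idA_eqtheory _) O.
move/(dvdn_idA (prime_gt0 p_pr))/dvdn_leq => /(_ (prime_gt0 p_pr)).
have p_gt1 := prime_gt1 p_pr.
have : p < p ^ 2 by rewrite -{1}(expn1 p) ltn_exp2l.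
lia.
Qed.

Lemma ZM_like_iff A : is_eqtheory A -> ZM_like A <-> same_theory A idZM.
Proof.
move=> hA; split; last first.
  move=> E; split; first exact: com_atom_same (same_theory_sym E) com_atom_idZM.
  exists idZsq4, idZ3; split; last 2 first.
  - exact: idZ3_idZsq4_incomparable.2.
  - exact: idZ3_idZsq4_incomparable.1.
  - by split; apply: idZero_eqtheory; [exact: zero_sq4_ideal|exact: zero3_ideal].
  - exact: only_atom_same (same_theory_sym E) only_atom_idZsq4.
  - exact: only_atom_same (same_theory_sym E) only_atom_idZ3.
case=> atA [Y [Z [[hY hZ] OY OZ nYZ nZY]]].
case: (com_atom_cases hA atA) => [//|E|[p p_pr E]]; exfalso.
  have SL_bot_or_eq W : is_eqtheory W -> only_atom W A -> com_bot W \/ same_theory W idSL.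
    move=> hW OW; apply: (proj2 com_atom_idSL W hW).
    exact: only_atom_idSL hW (only_atom_same E OW).
  case: (SL_bot_or_eq Y hY OY) => [/(com_bot_le hZ) //|EY].
  case: (SL_bot_or_eq Z hZ OZ) => [/(com_bot_le hY) //|EZ].
  by apply: nYZ; apply: subtheory_trans (same_subtheory EZ) (same_subtheory (same_theory_sym EY)).
have [i Ei] := only_atom_idA p_pr hY (only_atom_same E OY).
have [j Ej] := only_atom_idA p_pr hZ (only_atom_same E OZ).
have pow_le k l : k <= l -> subtheory (idA (p ^ l)) (idA (p ^ k)).
  by move=> kl; apply/idA_dvd/dvdn_exp2l.
have [ij|ji] := leqP i j.
  apply: nYZ; apply: subtheory_trans (same_subtheory Ej) _.
  exact: subtheory_trans (pow_le _ _ ij) (same_subtheory (same_theory_sym Ei)).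
apply: nZY; apply: subtheory_trans (same_subtheory Ei) _.
exact: subtheory_trans (pow_le _ _ (ltnW ji)) (same_subtheory (same_theory_sym Ej)).
Qed.

Lemma ex_SL_like_le A : (exists S, [/\ is_eqtheory S, SL_like S & com_le S A]) <-> subtheory A idSL.
Proof.
split.
  move=> [S [hS /(SL_like_iff hS) SSL AS]].
  exact: subtheory_trans AS (same_subtheory SSL).
move=> ASL; exists idSL; split => //; first exact: idSL_eqtheory.
by apply/(SL_like_iff idSL_eqtheory).
Qed.

Lemma ex_ZM_like_le A : (exists S, [/\ is_eqtheory S, ZM_like S & com_le S A]) <-> subtheory A idZM.
Proof.
split.
  move=> [S [hS /(ZM_like_iff hS) SZM AS]].
  exact: subtheory_trans AS (same_subtheory SZM).
move=> AZM; exists idZM; split => //; first exact: idZM_eqtheory.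
by apply/(ZM_like_iff idZM_eqtheory).
Qed.

Lemma same_idA_iff A : is_eqtheory A ->
  ~ subtheory A idSL /\ ~ subtheory A idZM <-> exists n, 0 < n /\ same_theory A (idA n).
Proof.
move=> hA; split; first by case=> nSL nZM; apply: same_idA_of_not_sub.
move=> [n [n_gt0 E]]; have AnA := same_subtheory (same_theory_sym E).
by split; [apply: idA_sub_not_sub_idSL AnA | apply: idA_sub_not_sub_idZM AnA].
Qed.

(** * Semigroups and their identities *)

Section Semigroup.
Variable S : semigroup.
Implicit Types (x y : S) (a : nat -> S).

Definition commutative_sg := forall x y : S, sg_op x y = sg_op y x.

Lemma eval_from_cat a acc w1 w2 :
  eval_from a acc (w1 ++ w2) = eval_from a (eval_from a acc w1) w2.
Proof. by elim: w1 acc => //= n w IH acc. Qed.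

Lemma eval_from_op a c b w : eval_from a (sg_op c b) w = sg_op c (eval_from a b w).
Proof. by elim: w b => //= n w IH b; rewrite -sg_assoc IH. Qed.

Lemma eval_cons a n w : w <> [::] -> eval_word a (n :: w) = sg_op (a n) (eval_word a w).
Proof. by case: w => //= m w _; rewrite eval_from_op. Qed.

Lemma eval_cat a u w : u <> [::] -> w <> [::] ->
  eval_word a (u ++ w) = sg_op (eval_word a u) (eval_word a w).
Proof. by case: u => // n u _; case: w => // m w _ /=; rewrite eval_from_cat /= eval_from_op. Qed.

Lemma eval_subst a s u : (forall n, s n <> [::]) -> u <> [::] ->
  eval_word a (subst s u) = eval_word (fun i => eval_word a (s i)) u.
Proof.
move=> Hs; elim: u => // n u IH _; case: u IH => [|m u] IH.
  by rewrite subst_cons /subst /= cats0.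
by rewrite subst_cons eval_cat ?IH ?[RHS]eval_cons //; apply: subst_neq0.
Qed.

Definition identities : theory :=
  nonempty_rel (fun u v => forall a, eval_word a u = eval_word a v).

Lemma identities_eqtheory : commutative_sg -> is_eqtheory identities.
Proof.
move=> C; apply: nonempty_rel_eqtheory.
- by [].
- by move=> u v H a; rewrite H.
- by move=> u v w H1 H2 a; rewrite H1 H2.
- by move=> u v w Hu Hv Hw H a; rewrite !eval_cat // H.
- by move=> u v w Hu Hv Hw H a; rewrite !eval_cat // H.
- by move=> s u v Hs Hu Hv H a; rewrite !eval_subst.
- by move=> a /=; apply: C.
Qed.

Lemma in_variety_iff T : is_eqtheory T -> in_variety T S <-> subtheory T identities.
Proof.
move=> hT; split; last by move=> TS u v /TS [].
by move=> TS u v Tuv; have [Hu Hv] := eqt_nonempty hT Tuv; split => //; apply: TS.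
Qed.

Lemma commutative_of_variety T : is_eqtheory T -> in_variety T S -> commutative_sg.
Proof. by move=> hT TS x y; apply: (TS _ _ (eqt_comm hT) (fun i => if i == 0 then x else y)). Qed.

Lemma spowS x k : 0 < k -> spow x k.+1 = sg_op (spow x k) x.
Proof. by case: k. Qed.

Lemma eval_nseq a k i : eval_word a (nseq k.+1 i) = spow (a i) k.+1.
Proof.
have eval_from_nseq acc l : eval_from a acc (nseq l i) = iter l (fun t => sg_op t (a i)) acc.
  by elim: l acc => //= l IH acc; rewrite IH; elim: l {IH} => //= l ->.
by rewrite /= eval_from_nseq; elim: k => // k IH; rewrite iterS IH.
Qed.

Lemma spowD x m n : 0 < m -> 0 < n -> spow x (m + n) = sg_op (spow x m) (spow x n).
Proof.
move=> m_gt0; elim: n => // [[|n]] IH _; first by rewrite addn1 spowS.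
by rewrite addnS spowS ?IH // ?addn_gt0 ?m_gt0 // (spowS x (k := n.+1)) // sg_assoc.
Qed.

Lemma spowM x m n : 0 < m -> 0 < n -> spow (spow x m) n = spow x (m * n).
Proof.
move=> m_gt0; elim: n => // [[|n]] IH _; first by rewrite muln1.
by rewrite spowS // IH // (mulnS m n.+1) addnC spowD // muln_gt0 m_gt0.
Qed.

Lemma spow_op x y k : commutative_sg -> 0 < k ->
  spow (sg_op x y) k = sg_op (spow x k) (spow y k).
Proof.
move=> C; elim: k => // [[|k]] IH _ //.
rewrite (spowS (sg_op x y) (k := k.+1)) // IH // (spowS x (k := k.+1)) //.
rewrite (spowS y (k := k.+1)) // -!sg_assoc; congr sg_op.
by rewrite sg_assoc (C _ x) -sg_assoc.
Qed.

End Semigroup.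

Definition bool_and_sg : semigroup := @Defs.Semigroup bool andb true andbA.

Lemma idSL_sub_bool_and : subtheory idSL (identities bool_and_sg).
Proof.
have eval_and (a : nat -> bool_and_sg) acc w : eval_from a acc w = acc && all a w.
  by elim: w acc => [|n w IH] acc /=; rewrite ?andbT // IH andbA.
move=> [|n u] [|m v] [Hu Hv HP] //; split => // a; rewrite /= !eval_and.
have := HP (predC a); rewrite !has_predC /=.
by case: (a n); case: (a m); case: (all a u); case: (all a v).
Qed.

Lemma bool_and_not_group : ~ is_group bool_and_sg.
Proof. by move=> [e [He /(_ false) [y [E1 _]]]]; have [/= E2 _] := He true; rewrite -E1 in E2. Qed.

Lemma bool_and_not_nil : ~ is_nil_semigroup bool_and_sg.
Proof.
move=> [z [/(_ false) [/= z0 _] /(_ true) [n [_]]]].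
have -> : spow (true : bool_and_sg) n = true by elim: n => // [[|k]] //= ->.
by move=> Ez; rewrite -Ez in z0.
Qed.

Definition null_sg : semigroup := @Defs.Semigroup bool (fun _ _ => false) true (fun _ _ _ => erefl).

Lemma idZM_sub_null : subtheory idZM (identities null_sg).
Proof.
have eval_null (a : nat -> null_sg) acc w : eval_from a acc w = if w is [::] then acc else false.
  by elim: w acc => // n w IH acc /=; rewrite IH; case: w {IH}.
move=> u v [Hu Hv Huv]; split => // a; case: Huv => [-> //|[]].
case: u Hu => [|n [|n' u]] //= _ _; case: v Hv => [|m [|m' v]] //= _ _.
by rewrite !eval_null; case: (u); case: (v).
Qed.

Lemma null_not_group : ~ is_group null_sg.
Proof. by move=> [e [/(_ true) [/= E _] _]]. Qed.

Definition Zp_sg (n : nat) : semigroup := @Defs.Semigroup 'Z_n +%R 0%R (@addrA _).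

Lemma Zp_sg_abelian n : 1 < n -> is_abelian_group_exp (Zp_sg n) n.
Proof.
move=> n_gt1; split; first exact: addrC.
exists 0%R; split; first by move=> x; split; [apply: add0r|apply: addr0].
split; first by move=> x; exists (- x)%R; split; [apply: subrr|apply: addNr].
case: n n_gt1 => // n n_gt1 x.
have spow_Zp (y : Zp_sg n.+1) k : spow y k.+1 = (y *+ k.+1)%R.
  by elim: k => // k IH; rewrite spowS // IH /= [RHS]mulrSr.
rewrite spow_Zp -mulr_natr.
by rewrite (pchar_Zp n_gt1) mulr0.
Qed.

Lemma Zp_sg_not_trivial n : 1 < n -> ~ is_trivial (Zp_sg n).
Proof. by move=> n_gt1 /(_ 0%R 1%R) /eqP; rewrite eq_sym oner_eq0. Qed.

Lemma Zp_sg_not_nil n : 1 < n -> ~ is_nil_semigroup (Zp_sg n).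
Proof.
move=> n_gt1 [z [/(_ 1%R) [/= E _] _]].
have : (z + 1 = z + 0)%R by rewrite E addr0.
by move/addrI/eqP; rewrite oner_eq0.
Qed.

Lemma abelian_group_exp_group S n : is_abelian_group_exp S n -> is_group S.
Proof. by move=> [_ [e [He [Hi _]]]]; exists e. Qed.

Lemma idA_sub_abelian_group_exp S n : is_abelian_group_exp S n -> subtheory (idA n) (identities S).
Proof.
move=> [C [e [He [_ Hn]]]]; apply: (idA_sub_of_xyn (identities_eqtheory C)); split => // a.
by case: n Hn => [|n] Hn //; rewrite eval_cons // eval_nseq Hn; case: (He (a 0)).
Qed.

(* x y^n = x forces y^n to be a common neutral element. *)
Lemma abelian_group_exp_of_xyn S n : 0 < n -> commutative_sg S ->
  (forall x y : S, sg_op x (spow y n) = x) -> is_abelian_group_exp S n.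
Proof.
move=> n_gt0 C xyn; split => //; set e := spow (sg_pt S) n.
have He x : sg_op e x = x /\ sg_op x e = x by rewrite C xyn.
have Hx x : spow x n = e by rewrite -(xyn (spow x n) (sg_pt S)) C xyn.
exists e; split => //; split => // x.
have [n1|n_neq1] := eqVneq n 1.
  have := xyn x x; rewrite n1 /= => xx.
  by exists e; rewrite -(Hx x) n1 /= xx.
have yx : sg_op (spow x n.-1) x = e.
  by rewrite -spowS ?prednK ?Hx //; lia.
by exists (spow x n.-1); rewrite C yx.
Qed.

Lemma abelian_periodic_iff T : is_eqtheory T ->
  abelian_periodic_group_variety T <-> exists n, 0 < n /\ same_theory T (idA n).
Proof.
move=> hT; split.
  move=> [n [n_gt0 HS]]; apply: same_idA_of_not_sub => // [ZM|SL].
    have /HS/abelian_group_exp_group : in_variety T null_sg.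
      by apply/(in_variety_iff _ hT); apply: subtheory_trans ZM idZM_sub_null.
    exact: null_not_group.
  have /HS/abelian_group_exp_group : in_variety T bool_and_sg.
    by apply/(in_variety_iff _ hT); apply: subtheory_trans SL idSL_sub_bool_and.
  exact: bool_and_not_group.
move=> [n [n_gt0 E]]; exists n; split => // S; split; last first.
  move/idA_sub_abelian_group_exp => AS; apply/(in_variety_iff _ hT).
  exact: subtheory_trans (same_subtheory E) AS.
move=> TS; apply: abelian_group_exp_of_xyn => //; first exact: commutative_of_variety TS.
move=> x y; have := TS _ _ (proj2 (E _ _) (idA_xyn n)) (fun i => if i == 0 then x else y).
by case: n n_gt0 {E} => // n _; rewrite eval_cons // eval_nseq.
Qed.

Section GroupPowers.
Variables (S : semigroup) (e g : S).
Hypothesis He : forall x, sg_op e x = x /\ sg_op x e = x.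
Hypothesis Hinv : forall x, exists y, sg_op x y = e /\ sg_op y x = e.

Definition gpow k := iter k (sg_op g) e.

Lemma gpowD a b : gpow (a + b) = sg_op (gpow a) (gpow b).
Proof.
elim: a => [|a IH]; first by rewrite /gpow /=; case: (He (gpow b)).
by rewrite addSn /gpow /= -/(gpow (a + b)) -/(gpow a) IH sg_assoc.
Qed.

Lemma eval_gpow (f : nat -> nat) w : w <> [::] ->
  eval_word (fun i => gpow (f i)) w = gpow (sumn (map f w)).
Proof.
have eval_from_gpow acc w' :
    eval_from (fun i => gpow (f i)) acc w' = sg_op acc (gpow (sumn (map f w'))).
  elim: w' acc => [|j w' IH] acc /=; first by case: (He acc).
  by rewrite IH gpowD sg_assoc.
by case: w => // j w _; rewrite /= eval_from_gpow -gpowD.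
Qed.

Lemma gpow_subn a b : a <= b -> gpow a = gpow b -> gpow (b - a) = e.
Proof.
move=> ab E; have [h [_ ha]] := Hinv (gpow a).
have Eb : gpow b = sg_op (gpow a) (gpow (b - a)) by rewrite -gpowD subnKC.
have := congr1 (sg_op h) E; rewrite Eb sg_assoc ha.
by case: (He (gpow (b - a))) => -> _ <-.
Qed.

Lemma gpow_eq_mod o a b : 0 < o -> gpow o = e ->
  (forall d, 0 < d < o -> gpow d <> e) -> gpow a = gpow b -> a = b %[mod o].
Proof.
move=> o_gt0 go o_least.
have gpow_mod c : gpow c = gpow (c %% o).
  have gpowM q : gpow (q * o) = e by elim: q => // q IH; rewrite mulSn gpowD go IH; case: (He e).
  by rewrite {1}(divn_eq c o) gpowD gpowM; case: (He (gpow (c %% o))).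
rewrite (gpow_mod a) (gpow_mod b); have := ltn_pmod a o_gt0; have := ltn_pmod b o_gt0.
move: (a %% o) (b %% o) => r1 r2 r2o r1o E; have [r12|r21|//] := ltngtP r1 r2.
  by case: (o_least (r2 - r1)); [lia | apply: gpow_subn => //; lia].
by case: (o_least (r1 - r2)); [lia | apply: gpow_subn => //; lia].
Qed.

Lemma gpow_inj a b : (forall d, 0 < d -> gpow d <> e) -> gpow a = gpow b -> a = b.
Proof.
move=> ne E; have [ab|ba|//] := ltngtP a b.
  by case: (ne (b - a)); [lia | apply: gpow_subn => //; lia].
by case: (ne (a - b)); [lia | apply: gpow_subn => //; lia].
Qed.

End GroupPowers.

(* The subvarieties of T that are Abelian periodic group varieties are
   trivial. *)
Definition group_free (T : theory) := forall G, is_eqtheory G -> subtheory T G ->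
  ~ subtheory G idSL -> ~ subtheory G idZM -> com_bot G.

Lemma group_free_not_sub_idA T n : group_free T -> 1 < n -> ~ subtheory T (idA n).
Proof.
move=> gfT n_gt1 TA; have n_gt0 : 0 < n by lia.
apply: (idA_not_bot n_gt1); apply: (gfT (idA n)) => //; first exact: idA_eqtheory.
  exact: (idA_sub_not_sub_idSL n_gt0).
exact: (idA_sub_not_sub_idZM n_gt0).
Qed.

Lemma group_free_of T (P : semigroup -> Prop) : is_eqtheory T ->
  (forall n, 1 < n -> ~ P (Zp_sg n)) -> (forall S, in_variety T S -> P S) -> group_free T.
Proof.
move=> hT nPZ TP G hG TG nSL nZM; have [n [n_gt0 E]] := same_idA_of_not_sub hG nZM nSL.
have [n1|n_neq1] := eqVneq n 1.
  rewrite n1 in E; apply: subtheory_trans (same_subtheory (same_theory_sym idA1_triv)) _.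
  exact: same_subtheory (same_theory_sym E).
have n_gt1 : 1 < n by lia.
case: (nPZ n n_gt1); apply: TP; apply/(in_variety_iff _ hT).
apply: subtheory_trans (idA_sub_abelian_group_exp (Zp_sg_abelian n_gt1)).
exact: subtheory_trans TG (same_subtheory E).
Qed.

(* Evaluate at powers of an element g <> e of a group in the variety. *)
Lemma nontrivial_group_sub_idA T S : is_eqtheory T -> in_variety T S -> is_group S ->
  ~ is_trivial S -> exists2 o, 1 < o & subtheory T (idA o).
Proof.
move=> hT TS [e [He Hinv]] nS.
have [g ge] : exists g : S, g <> e.
  apply: NNPP => ne; apply: nS => x y.
  have all_e z : z = e by apply: NNPP => nz; apply: ne; exists z.
  by rewrite (all_e x) (all_e y).
have Tgpow u v : T u v -> forall f : nat -> nat,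
    gpow e g (sumn (map f u)) = gpow e g (sumn (map f v)).
  move=> Tuv f; have [Hu Hv] := eqt_nonempty hT Tuv.
  by rewrite -!(eval_gpow g He) //; apply: TS.
have g1 : gpow e g 1 = g by rewrite /gpow /=; case: (He g).
have [fin|nfin] := classic (exists d, 0 < d /\ gpow e g d = e).
  have [o [o_gt0 go o_least]] := ex_least_pos fin.
  have o_gt1 : 1 < o by case: o o_gt0 go {o_least} => [|[|o]] // _; rewrite g1.
  exists o => // u v Tuv; have [Hu Hv] := eqt_nonempty hT Tuv.
  by split => // f; apply: (gpow_eq_mod He Hinv o_gt0 go o_least); apply: Tgpow.
exists 2 => // u v Tuv; have [Hu Hv] := eqt_nonempty hT Tuv.
split => // f; congr modn; apply: (gpow_inj He Hinv); last exact: Tgpow.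
by move=> k k_gt0 gk; apply: nfin; exists k.
Qed.

Lemma combinatorial_iff T : is_eqtheory T -> combinatorial T <-> group_free T.
Proof.
move=> hT; split.
  move=> cT; apply: (group_free_of (P := fun S => is_group S -> is_trivial S)) => //.
  move=> n n_gt1 Ptriv; apply: (Zp_sg_not_trivial n_gt1); apply: Ptriv.
  exact: abelian_group_exp_group (Zp_sg_abelian n_gt1).
move=> gfT S TS gS; apply: NNPP => nS.
have [o o_gt1 TA] := nontrivial_group_sub_idA hT TS gS nS.
exact: (group_free_not_sub_idA gfT o_gt1 TA).
Qed.

(* Substituting x for y, and then x^2 for y, in x^a y^b = x^c. *)
Lemma not_sub_idSL_xpow_period T : is_eqtheory T -> ~ subtheory T idSL ->
  exists i m, [/\ 0 < i, 0 < m & T (xpow i) (xpow (i + m))].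
Proof.
move=> hT nSL; have [a [b [c [b_gt0 c_gt0 Tabc]]]] := not_sub_idSL_witness hT nSL.
have period p q : 0 < p -> 0 < q -> p <> q -> T (xpow p) (xpow q) ->
    exists i m, [/\ 0 < i, 0 < m & T (xpow i) (xpow (i + m))].
  move=> p_gt0 q_gt0 pq Tpq; have [lpq|lqp|//] := ltngtP p q.
    by exists p, (q - p); split; [| lia | rewrite subnKC // ltnW].
  exists q, (p - q); split; [done | lia | rewrite subnKC; last exact: ltnW].
  exact: (eqt_sym hT).
have Tk k : 0 < k -> T (xpow (a + b * k)) (xpow c).
  move=> k_gt0; pose g i := if i == 0 then 1 else k.
  have Hs i : xpow (g i) <> [::] by apply: xpow_neq0; rewrite /g; case: (i == 0).
  have := eqt_subst hT Tabc Hs; rewrite !subst_xpow map_cat sumn_cat !sumn_map_nseq.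
  by rewrite /g /= !muln1.
have [E|E] := eqVneq (a + b * 1) c.
  by apply: (period (a + b * 2) c); [lia | done | lia | exact: Tk].
by apply: (period (a + b * 1) c); [lia | done | exact/eqP | exact: Tk].
Qed.

Section PeriodPart.
Variables (S : semigroup) (m : nat).
Hypothesis C : commutative_sg S.

Definition period_elt (s : S) := spow s m.+1 = s.

Lemma period_elt_op s t : period_elt s -> period_elt t -> period_elt (sg_op s t).
Proof. by move=> Hs Ht; rewrite /period_elt spow_op // Hs Ht. Qed.

Definition period_op (s t : {s : S | period_elt s}) : {s : S | period_elt s} :=
  exist _ (sg_op (sval s) (sval t)) (period_elt_op (svalP s) (svalP t)).

Lemma period_val_inj : injective (@sval S period_elt).
Proof. by move=> s t; apply: eq_sig_hprop => x; apply: proof_irrelevance. Qed.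

Lemma period_op_assoc : forall x y z, period_op x (period_op y z) = period_op (period_op x y) z.
Proof. by move=> x y z; apply: period_val_inj; apply: sg_assoc. Qed.

(* The elements s with s^(m+1) = s, a union of groups. *)
Definition period_sg (z0 : {s : S | period_elt s}) : semigroup :=
  @Defs.Semigroup _ period_op z0 period_op_assoc.

Lemma eval_period_sg z0 (a : nat -> period_sg z0) u : u <> [::] ->
  sval (eval_word a u) = eval_word (fun i => sval (a i)) u.
Proof.
have eval_from_val acc w : sval (eval_from a acc w) = eval_from (fun i => sval (a i)) (sval acc) w.
  by elim: w acc => //= n w IH acc; rewrite IH.
by case: u => // n u _; apply: eval_from_val.
Qed.

Lemma period_sg_trivial T z0 : is_eqtheory T -> ~ subtheory T idSL -> group_free T ->
  in_variety T S -> 0 < m -> is_trivial (period_sg z0).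
Proof.
move=> hT nSL gfT TS m_gt0.
have TP : in_variety T (period_sg z0).
  move=> u v Tuv a; have [Hu Hv] := eqt_nonempty hT Tuv.
  by apply: period_val_inj; rewrite !eval_period_sg //; apply: TS.
have CP : commutative_sg (period_sg z0) by move=> x y; apply: period_val_inj; apply: C.
have /(in_variety_iff _ hT) TI := TP.
have Ibot : com_bot (identities (period_sg z0)).
  apply: gfT => //; first exact: identities_eqtheory.
    by move=> ISL; apply: nSL; apply: subtheory_trans TI ISL.
  have Ix : identities (period_sg z0) [:: 0] (xpow m.+1).
    split => // a; apply: period_val_inj.
    by rewrite !eval_period_sg // eval_nseq; exact: (esym (svalP (a 0))).
  by move=> /(_ _ _ Ix) [_ _ [/(congr1 size)|[]]]; rewrite /= size_nseq; lia.
move=> s t; have [_ _] := Ibot _ _ (triv_theory_cons 0 1 [::] [::]).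
by move=> /(_ (fun k => if k == 0 then s else t)).
Qed.

End PeriodPart.

Lemma spow_period (S : semigroup) (x : S) i m : 0 < i -> spow x i = spow x (i + m) ->
  forall j t, i <= j -> spow x (j + t * m) = spow x j.
Proof.
move=> i_gt0 per j t ij; elim: t => [|t IH]; first by rewrite addn0.
rewrite mulSn addnCA addnC -IH; set k := j + t * m.
have ik : i <= k by rewrite /k; lia.
have [->|neq_ki] := eqVneq k i; first by rewrite -per.
have ki_gt0 : 0 < k - i by lia.
have -> : k + m = (k - i) + (i + m) by lia.
by rewrite spowD ?addn_gt0 ?i_gt0 // -per -spowD // subnK.
Qed.

(* x^(im) lies in the union of groups of the elements s with s^(m+1) = s,
   which is trivial; its only element z is a zero. *)
Lemma nil_variety_iff T : is_eqtheory T ->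
  nil_variety T <-> ~ subtheory T idSL /\ group_free T.
Proof.
move=> hT; split.
  move=> nT; split.
    move=> TSL; apply: bool_and_not_nil; apply: nT; apply/(in_variety_iff _ hT).
    exact: subtheory_trans TSL idSL_sub_bool_and.
  by apply: (group_free_of (P := is_nil_semigroup)) => // n; apply: Zp_sg_not_nil.
move=> [nSL gfT] S TS; have C := commutative_of_variety hT TS.
have [i [m [i_gt0 m_gt0 Tim]]] := not_sub_idSL_xpow_period hT nSL.
have per (x : S) : spow x i = spow x (i + m).
  by have := TS _ _ Tim (fun _ => x); case: (i) i_gt0 => // i' _; rewrite addSn !eval_nseq.
have im_gt0 : 0 < i * m by rewrite muln_gt0 i_gt0.
have im_period (x : S) : period_elt m (spow x (i * m)).
  by rewrite /period_elt spowM // mulnS (spow_period i_gt0 (per x)) // leq_pmulr.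
pose z0 := exist (period_elt m) (spow (sg_pt S) (i * m)) (im_period _).
have Ptriv := period_sg_trivial (C := C) (z0 := z0) hT nSL gfT TS m_gt0.
have zx (x : S) : spow x (i * m) = sval z0.
  by have := Ptriv (exist _ _ (im_period x)) z0; move/(congr1 sval).
have zy (y : S) : sg_op (sval z0) y = sval z0.
  have : period_elt m (sg_op (sval z0) y).
    rewrite /period_elt spow_op // (svalP z0) -(zx y) -spowD //.
    have -> : i * m + m.+1 = (i * m).+1 + 1 * m by lia.
    have im_ge : i <= i * m by rewrite leq_pmulr.
    by rewrite (spow_period i_gt0 (per y)) ?spowS //; lia.
  by move=> zyP; have := Ptriv (exist _ _ zyP) z0; move/(congr1 sval).
exists (sval z0); split; first by move=> x; split; [exact: zy | rewrite C zy].
by move=> x; exists (i * m); split; last exact: zx.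
Qed.

(** * Defining formulas *)

(* In the formulas below, [k] is the first variable index that is free for
   use as a bound variable; all parameters are below [k]. *)
Definition LeF s t := FEq (LJoin (LVar s) (LVar t)) (LVar t).
Definition EqF s t := FEq (LVar s) (LVar t).
Definition BotF s k := FForall k (LeF s k).
Definition AtomF a k := FAnd (FNot (BotF a k))
  (FForall k (FImp (LeF k a) (FOr (BotF k k.+1) (EqF k a)))).
Definition OnlyAtomF y a k := FForall k (FImp (FAnd (AtomF k k.+1) (LeF k y)) (EqF k a)).
Definition SLF a k := FAnd (AtomF a k) (FForall k (FImp (OnlyAtomF k a k.+1) (LeF k a))).
Definition ZMF a k := FAnd (AtomF a k) (FExists k (FExists k.+1
  (FAnd (FAnd (OnlyAtomF k a k.+2) (OnlyAtomF k.+1 a k.+2))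
        (FAnd (FNot (LeF k k.+1)) (FNot (LeF k.+1 k)))))).
Definition HasSLF x k := FExists k (FAnd (SLF k k.+1) (LeF k x)).
Definition HasZMF x k := FExists k (FAnd (ZMF k k.+1) (LeF k x)).
Definition GroupF x k := FAnd (FNot (HasSLF x k)) (FNot (HasZMF x k)).
Definition CombF x k := FForall k (FImp (FAnd (LeF k x) (GroupF k k.+1)) (BotF k k.+1)).
Definition NilF x k := FAnd (FNot (HasSLF x k)) (CombF x k).

Lemma upd_eq e k T : upd e k T k = T.
Proof. by rewrite /upd eqxx. Qed.

Lemma upd_neq e k T j : j != k -> upd e k T j = e j.
Proof. by rewrite /upd => /negbTE ->. Qed.

Lemma holds_and e f g : holds e (FAnd f g) <-> holds e f /\ holds e g.
Proof. by []. Qed.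

Lemma holds_or e f g : holds e (FOr f g) <-> holds e f \/ holds e g.
Proof. by []. Qed.

Lemma holds_not e f : holds e (FNot f) <-> ~ holds e f.
Proof. by []. Qed.

Lemma holds_imp e f g : holds e (FImp f g) <-> (holds e f -> holds e g).
Proof. by []. Qed.

Lemma holds_forall e k f (P : theory -> Prop) :
  (forall Y, is_eqtheory Y -> holds (upd e k Y) f <-> P Y) ->
  holds e (FForall k f) <-> forall Y, is_eqtheory Y -> P Y.
Proof. by move=> H; split=> H' Y hY; apply/(H Y hY)/H'. Qed.

Lemma holds_exists e k f (P : theory -> Prop) :
  (forall Y, is_eqtheory Y -> holds (upd e k Y) f <-> P Y) ->
  holds e (FExists k f) <-> exists Y, is_eqtheory Y /\ P Y.
Proof. by move=> H; split=> [[Y [hY /(H Y hY) ?]]|[Y [hY /(H Y hY) ?]]]; exists Y. Qed.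

Lemma holds_Le e s t : holds e (LeF s t) <-> com_le (e s) (e t).
Proof.
rewrite /= /same_theory /com_join /com_le /subtheory; split; first by move=> H u v /H [].
by move=> H u v; split => [[]//|Huv]; split => //; apply: H.
Qed.

Lemma holds_Eq e s t : holds e (EqF s t) <-> same_theory (e s) (e t).
Proof. by []. Qed.

Lemma holds_Bot e s k : s != k -> holds e (BotF s k) <-> com_bot (e s).
Proof.
move=> sk; split.
  by move=> /(_ _ triv_theory_eqtheory) /holds_Le; rewrite /com_le upd_eq upd_neq.
move=> sbot T hT; apply/holds_Le; rewrite /com_le upd_eq upd_neq //.
exact: subtheory_trans (sub_triv_theory hT) sbot.
Qed.

Lemma holds_Atom e a k : a < k -> holds e (AtomF a k) <-> com_atom (e a).
Proof.
move=> ak; have ak' : a != k by rewrite neq_ltn ak.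
have kk : k != k.+1 by rewrite neq_ltn ltnSn.
rewrite /AtomF holds_and holds_not holds_Bot //.
apply: and_iff_compat_l; apply: holds_forall => Y hY.
by rewrite holds_imp holds_or holds_Le holds_Bot // holds_Eq !upd_eq upd_neq.
Qed.

Lemma holds_OnlyAtom e y a k : y < k -> a < k ->
  holds e (OnlyAtomF y a k) <-> only_atom (e y) (e a).
Proof.
move=> yk ak; have yk' : y != k by rewrite neq_ltn yk.
have ak' : a != k by rewrite neq_ltn ak.
apply: holds_forall => B hB.
rewrite holds_imp holds_and holds_Atom // holds_Le holds_Eq !upd_eq !upd_neq //.
by split=> H; [move=> ? ?; apply: H | case; apply: H].
Qed.

Lemma holds_SL e a k : a < k -> holds e (SLF a k) <-> SL_like (e a).
Proof.
move=> ak; have ak' : a != k by rewrite neq_ltn ak.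
rewrite /SLF holds_and holds_Atom //; apply: and_iff_compat_l; apply: holds_forall => Y hY.
by rewrite holds_imp holds_OnlyAtom ?ltnSn ?(ltn_trans ak) // holds_Le !upd_eq upd_neq.
Qed.

Lemma holds_ZM e a k : a < k -> holds e (ZMF a k) <-> ZM_like (e a).
Proof.
move=> ak; have ak' : a != k by rewrite neq_ltn ak.
have ak1 : a != k.+1 by rewrite neq_ltn ltnS ltnW.
have kk : k != k.+1 by rewrite neq_ltn ltnSn.
have ak2 : a < k.+2 by rewrite (ltn_trans ak) // ltnS ltnW.
rewrite /ZMF holds_and holds_Atom //; apply: and_iff_compat_l.
pose P Y := exists Z, is_eqtheory Z /\ (only_atom Y (e a) /\ only_atom Z (e a)) /\
  (~ com_le Y Z /\ ~ com_le Z Y).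
apply: (@iff_trans _ (exists Y, is_eqtheory Y /\ P Y)).
  apply: holds_exists => Y hY; apply: holds_exists => Z hZ.
  have Ek : upd (upd e k Y) k.+1 Z k = Y by rewrite upd_neq // upd_eq.
  have Ea : upd (upd e k Y) k.+1 Z a = e a by rewrite !upd_neq.
  rewrite !holds_and !holds_not !holds_OnlyAtom ?ltnSn // 1?ltnW // !holds_Le.
  by rewrite Ek Ea upd_eq.
split=> [[Y [hY [Z [hZ [[OY OZ] [nYZ nZY]]]]]]|[Y [Z [[hY hZ] OY OZ nYZ nZY]]]].
  by exists Y, Z.
by exists Y; split => //; exists Z.
Qed.

Lemma holds_HasSL e x k : x < k -> holds e (HasSLF x k) <-> subtheory (e x) idSL.
Proof.
move=> xk; have xk' : x != k by rewrite neq_ltn xk.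
rewrite -ex_SL_like_le.
apply: (@iff_trans _ (exists S, is_eqtheory S /\ (SL_like S /\ com_le S (e x)))).
  by apply: holds_exists => S hS; rewrite holds_and holds_SL // holds_Le !upd_eq upd_neq.
by split=> [[S [hS []]]|[S []]]; exists S.
Qed.

Lemma holds_HasZM e x k : x < k -> holds e (HasZMF x k) <-> subtheory (e x) idZM.
Proof.
move=> xk; have xk' : x != k by rewrite neq_ltn xk.
rewrite -ex_ZM_like_le.
apply: (@iff_trans _ (exists S, is_eqtheory S /\ (ZM_like S /\ com_le S (e x)))).
  by apply: holds_exists => S hS; rewrite holds_and holds_ZM // holds_Le !upd_eq upd_neq.
by split=> [[S [hS []]]|[S []]]; exists S.
Qed.

Lemma holds_Group e x k : x < k ->
  holds e (GroupF x k) <-> ~ subtheory (e x) idSL /\ ~ subtheory (e x) idZM.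
Proof. by move=> xk; rewrite holds_and !holds_not holds_HasSL // holds_HasZM. Qed.

Lemma holds_Comb e x k : x < k -> holds e (CombF x k) <-> group_free (e x).
Proof.
move=> xk; have xk' : x != k by rewrite neq_ltn xk.
have kk : k != k.+1 by rewrite neq_ltn ltnSn.
apply: holds_forall => G hG.
rewrite holds_imp holds_and holds_Le holds_Group // holds_Bot // !upd_eq upd_neq //.
by split=> H; [move=> ? ? ?; apply: H | case=> ? []; apply: H].
Qed.

Lemma holds_Nil e x k : x < k ->
  holds e (NilF x k) <-> ~ subtheory (e x) idSL /\ group_free (e x).
Proof. by move=> xk; rewrite holds_and holds_not holds_HasSL // holds_Comb. Qed.

Theorem mainTheorem9 :
  definable abelian_periodic_group_variety /\
  definable combinatorial /\
  definable nil_variety.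
Proof.
split; [|split].
- exists (GroupF 0 1), 0 => e he.
  by rewrite holds_Group // same_idA_iff // abelian_periodic_iff.
- by exists (CombF 0 1), 0 => e he; rewrite holds_Comb // combinatorial_iff.
- by exists (NilF 0 1), 0 => e he; rewrite holds_Nil // nil_variety_iff.
Qed.
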